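(* Let $\Theta$ be a branch of a tableau of $\mathbf{TAB}_{\mathbf{IB}}$. For every nominal $i$ occurring in $\Theta$, the set $T^\Theta(i)$ is finite.
   Context: Hybrid language: fix disjoint countably infinite sets $\mathbf{Prop}$ and $\mathbf{Nom}$ (nominals). Formulas: $\varphi ::= p \mid i \mid \neg\varphi \mid \varphi\land\varphi \mid \Diamond\varphi \mid @_i\varphi$. A tableau of $\mathbf{TAB}_{\mathbf{IB}}$ is a tree whose nodes are formulas of the form $@_i\varphi$, with a root formula $@_{i_0}\varphi_0$ ($i_0$ not occurring in $\varphi_0$); a branch is a maximal path, and $\varphi\in\Theta$ means $\varphi$ occurs on branch $\Theta$. $@_i\varphi$ is a quasi-subformula of $@_j\psi$ if $\varphi$ is a subformula of $\psi$, or $\varphi=\neg\chi$ with $\chi$ a subformula of $\psi$. For a nominal $i$ occurring in $\Theta$, $T^\Theta(i)=\{\varphi \mid @_i\varphi\in\Theta$ and $@_i\varphi$ is a quasi-subformula of the root formula of $\Theta\}$. *)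

From Stdlib Require Import Ensembles Finite_sets.

(* Propositional variables and nominals: two disjoint countably infinite sets,
   both represented by nat but kept apart by distinct constructors. *)
Definition prop := nat.
Definition nom := nat.

Inductive form : Type :=
| FProp : prop -> form
| FNom : nom -> form
| FNeg : form -> form
| FAnd : form -> form -> form
| FDia : form -> form
| FAt : nom -> form -> form.

Inductive subformula : form -> form -> Prop :=
| sub_refl : forall phi, subformula phi phi
| sub_neg : forall phi psi, subformula phi psi -> subformula phi (FNeg psi)
| sub_andl : forall phi psi chi, subformula phi psi -> subformula phi (FAnd psi chi)
| sub_andr : forall phi psi chi, subformula phi chi -> subformula phi (FAnd psi chi)
| sub_dia : forall phi psi, subformula phi psi -> subformula phi (FDia psi)
| sub_at : forall phi i psi, subformula phi psi -> subformula phi (FAt i psi).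

(* A node of a tableau: the formula @_i phi, represented as the pair (i, phi). *)
Definition atf := (nom * form)%type.

Definition quasi_subformula (a b : atf) : Prop :=
  subformula (snd a) (snd b) \/
  exists chi, snd a = FNeg chi /\ subformula chi (snd b).

Fixpoint nom_occurs (i : nom) (phi : form) : Prop :=
  match phi with
  | FProp _ => False
  | FNom j => j = i
  | FNeg psi => nom_occurs i psi
  | FAnd psi chi => nom_occurs i psi \/ nom_occurs i chi
  | FDia psi => nom_occurs i psi
  | FAt j psi => j = i \/ nom_occurs i psi
  end.

Definition nom_occurs_atf (i : nom) (a : atf) : Prop :=
  fst a = i \/ nom_occurs i (snd a).

(* A branch (maximal path from the root) of a tableau, possibly infinite:
   the sequence of its nodes, indexed from the root.  [Theta n = None] means
   the branch has fewer than n+1 nodes. *)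
Record branch : Type := {
  br_nodes : nat -> option atf;
  br_root : atf;
  br_root_ok : br_nodes 0 = Some br_root;
  br_prefix : forall n, br_nodes (S n) <> None -> br_nodes n <> None;
  br_root_fresh : ~ nom_occurs (fst br_root) (snd br_root)
}.

Definition on_branch (Th : branch) (a : atf) : Prop :=
  exists n, br_nodes Th n = Some a.

Definition nom_in_branch (Th : branch) (i : nom) : Prop :=
  exists a, on_branch Th a /\ nom_occurs_atf i a.

Definition T_set (Th : branch) (i : nom) : Ensemble form :=
  fun phi => on_branch Th (i, phi) /\ quasi_subformula (i, phi) (br_root Th).

From Stdlib Require Import Ensembles Finite_sets Finite_sets_facts Image.

(* T^Theta(i) consists of subformulas of the root formula and their negations,
   and a formula has only finitely many subformulas.  The bound depends on the
   root formula alone. *)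

Lemma Finite_subformulas_of_closure (psi : form) (A : Ensemble form) :
  Finite form A ->
  (forall phi, subformula phi psi -> phi = psi \/ In form A phi) ->
  Finite form (fun phi => subformula phi psi).
Proof.
  intros finA closed.
  apply Finite_downward_closed with (A := Add form A psi).
  - now apply Add_preserves_Finite.
  - intros phi sub; destruct (closed phi sub) as [-> | inA].
    + now right.
    + now left.
Qed.

Lemma Finite_subformulas (psi : form) : Finite form (fun phi => subformula phi psi).
Proof.
  induction psi as [p | j | psi IH | psi IH chi IH' | psi IH | j psi IH].
  1, 2: apply Finite_subformulas_of_closure with (A := Empty_set form);
        [constructor | inversion 1; auto].
  1, 3, 4: apply Finite_subformulas_of_closure with (1 := IH);
           inversion 1; auto.
  apply Finite_subformulas_of_closure with (1 := Union_preserves_Finite _ _ _ IH IH').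
  inversion 1; subst; [left | right; left | right; right]; auto.
Qed.

Lemma Finite_quasi_subformulas (i : nom) (b : atf) :
  Finite form (fun phi => quasi_subformula (i, phi) b).
Proof.
  pose (subs := fun phi => subformula phi (snd b)).
  apply Finite_downward_closed with (A := Union form subs (Im form form subs FNeg)).
  - apply Union_preserves_Finite, finite_image; apply Finite_subformulas.
  - intros phi [sub | [chi [neg sub]]].
    + now left.
    + right; exists chi; [exact sub | exact neg].
Qed.

Theorem lemma2 (Th : branch) (i : nom) :
  nom_in_branch Th i -> Finite form (T_set Th i).
Proof.
  intros _.
  apply Finite_downward_closed with (1 := Finite_quasi_subformulas i (br_root Th)).
  now intros phi [_ quasi_sub].
Qed.
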